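(* Let $G$ be a left (resp. right) topological group and let $H$ be a closed subgroup of $G$. Then $\mathrm{r}_{\mathcal C_1}H=\mathrm{r}_{(G,\mathcal C_1)}(H)$; that is, the map $\mathrm{r}_{\mathcal C_1}H\to\mathrm{r}_{\mathcal C_1}G$ induced by the inclusion $H\hookrightarrow G$ is a homeomorphism of $\mathrm{r}_{\mathcal C_1}H$ onto the subspace $\mathrm{r}_{(G,\mathcal C_1)}(H)$ of $\mathrm{r}_{\mathcal C_1}G$.
   Context: A left (resp. right) topological group is a group with a topology in which all left translations $x\mapsto ax$ (resp. right translations $x\mapsto xa$) are continuous. $\mathcal C_1$ is the epireflective subcategory of $\mathbf{Top}$ of $T_1$ spaces; $\mathrm{r}_{\mathcal C_1}X$ is the $T_1$-reflection of a space $X$, with universal continuous surjection $\mathrm{r}_{(X,\mathcal C_1)}\colon X\to\mathrm{r}_{\mathcal C_1}X$ through which every continuous map from $X$ into a $T_1$ space factors uniquely. *)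

From HB Require Import structures.
From mathcomp Require Import all_boot all_order all_algebra.
From mathcomp Require Import all_classical all_reals all_analysis.
Set Implicit Arguments. Unset Strict Implicit. Unset Printing Implicit Defensive.
Local Open Scope classical_set_scope.

Definition is_group {G : Type} (mul : G -> G -> G) (inv : G -> G) (one : G) :=
  [/\ forall x y z, mul x (mul y z) = mul (mul x y) z,
      forall x, mul one x = x, forall x, mul x one = x,
      forall x, mul (inv x) x = one & forall x, mul x (inv x) = one].

Definition left_topological_group {G : topologicalType}
  (mul : G -> G -> G) (inv : G -> G) (one : G) :=
  is_group mul inv one /\ forall a : G, continuous (fun x => mul a x).

Definition right_topological_group {G : topologicalType}
  (mul : G -> G -> G) (inv : G -> G) (one : G) :=
  is_group mul inv one /\ forall a : G, continuous (fun x => mul x a).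

Definition is_subgroup {G : Type} (mul : G -> G -> G) (inv : G -> G) (one : G)
  (H : set G) :=
  [/\ H one, forall x y, H x -> H y -> H (mul x y) & forall x, H x -> H (inv x)].

Definition T1_reflection {X Y : topologicalType} (q : X -> Y) :=
  [/\ accessible_space Y, continuous q, (forall y : Y, exists x : X, q x = y) &
      forall (Z : topologicalType) (f : X -> Z), accessible_space Z ->
        continuous f ->
        exists! g : Y -> Z, continuous g /\ f = g \o q].

Definition homeomorphism_onto {X Y : topologicalType} (f : X -> Y) (A : set Y) :=
  exists (h : X -> set_type A) (k : set_type A -> X),
    [/\ cancel h k, cancel k h, continuous h, continuous k &
        f = set_val \o h].

From HB Require Import structures.
From mathcomp Require Import all_boot all_order all_algebra.
From mathcomp Require Import all_classical all_reals all_analysis.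
Set Implicit Arguments. Unset Strict Implicit. Unset Printing Implicit Defensive.
Local Open Scope classical_set_scope.

(* A T1-reflection q : X -> R identifies x and y only if every continuous map
   into a T1 space does, and it is a quotient map: both facts come from
   factoring through a T1 topology induced on a set by a map out of X.  In a
   left topological group the left cosets of a closed subgroup form such a T1
   space.  Applied in G to the closed subgroup formed by the qH-fibre of the
   identity of H, this shows that qG identifies two points of H exactly when
   qH does, and that the qG-saturation of a closed subset of H stays in H.
   Hence i is injective and, qG being a quotient map, closed: a homeomorphism
   onto its image qG(H).  The right case is the left case for the opposite
   multiplication. *)

Definition final_topology (X : topologicalType) (Y : choiceType) (p : X -> Y)
  : Type := Y.

Section final_topology.
Context (X : topologicalType) (Y : choiceType) (p : X -> Y).
Local Notation F := (final_topology p).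

HB.instance Definition _ := Choice.on F.

Definition final_open (U : set F) := open (p @^-1` U).

Program Definition final_topology_mixin :=
  @isOpenTopological.Build F final_open _ _ _.
Next Obligation. by rewrite /final_open preimage_setT; exact: openT. Qed.
Next Obligation. by move=> ? ? ? ?; exact: openI. Qed.
Next Obligation. by move=> I f ofi; apply: bigcup_open => i _; exact: ofi. Qed.
HB.instance Definition _ := final_topology_mixin.

Lemma final_continuous : continuous (p : X -> F).
Proof. exact/continuousP. Qed.

Lemma final_closed (C : set F) : closed (p @^-1` C) -> closed C.
Proof.
by move=> cC; rewrite -openC /open /= /final_open preimage_setC openC.
Qed.

Lemma final_accessible :
  (forall y : Y, closed (p @^-1` [set y])) -> accessible_space F.
Proof.
move=> fiber_closed x y xy; exists (~` [set y]); split.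
- by rewrite openC; apply: final_closed.
- by rewrite inE; exact/eqP.
- by rewrite inE /= => /(_ erefl).
Qed.

End final_topology.

Section T1_reflection.
Context (X R : topologicalType) (q : X -> R) (hq : T1_reflection q).

Lemma T1_reflection_fiber_closed (r : R) : closed (q @^-1` [set r]).
Proof.
case: hq => T1R cq _ _; apply: (continuous_closedP q).1 => //.
exact: accessible_closed_set1.
Qed.

Lemma T1_reflection_factor_eq (Z : topologicalType) (f : X -> Z) x y :
  accessible_space Z -> continuous f -> q x = q y -> f x = f y.
Proof.
case: hq => _ _ _ univ T1Z cf e.
by have [g [[_ ->] _]] := univ Z f T1Z cf; rewrite /= e.
Qed.

Lemma T1_reflection_compatible (phi : X -> X) x y :
  continuous phi -> q x = q y -> q (phi x) = q (phi y).
Proof.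
case: hq => T1R cq _ _ cphi.
apply: (T1_reflection_factor_eq (f := q \o phi)) => // z.
exact: continuous_comp (cphi z) (cq (phi z)).
Qed.

Lemma T1_reflection_fiber_eq (Y : choiceType) (p : X -> Y) x y :
  (forall z, closed (p @^-1` [set p z])) -> q x = q y -> p x = p y.
Proof.
move=> fiber_closed.
apply: (T1_reflection_factor_eq (f := p : X -> final_topology p)).
  apply: final_accessible => c.
  have [[z <-]|c_notin] := pselect (exists z, p z = c).
    exact: fiber_closed.
  suff -> : p @^-1` [set c] = set0 by exact: closed0.
  by apply/seteqP; split=> z //= pz; apply: c_notin; exists z.
exact: final_continuous.
Qed.

(* The identity of R factors continuously through the finer T1 topology that
   q induces on R, so q is a quotient map. *)
Lemma T1_reflection_quotient (D : set R) : closed (q @^-1` D) -> closed D.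
Proof.
case: hq => _ _ q_surj univ cD.
have [g [[cg qE] _]] := univ (final_topology q) (q : X -> final_topology q)
  (final_accessible T1_reflection_fiber_closed) (@final_continuous _ _ q).
have gK r : g r = r by have [x <-] := q_surj r; rewrite [in RHS]qE.
have -> : D = g @^-1` D by apply/seteqP; split=> r /=; rewrite gK.
exact: (continuous_closedP g).1 cg _ (final_closed cD).
Qed.

Lemma T1_reflection_image_closed (C : set X) :
  closed C -> (forall x c, C c -> q x = q c -> C x) -> closed (q @` C).
Proof.
move=> cC C_saturated; apply: T1_reflection_quotient.
suff -> : q @^-1` (q @` C) = C by [].
apply/seteqP; split=> x /=; last by exists x.
by case=> c Cc /esym; exact: C_saturated.
Qed.

End T1_reflection.

Lemma closed_set_val_image (X : topologicalType) (H : set X) (U : set H) :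
  closed H -> closed U -> closed (set_val @` U).
Proof.
move=> cH; rewrite -openC => -[V oV UE].
have -> : set_val @` U = H `&` ~` V.
  apply/seteqP; split=> x.
    case=> z Uz <-; split; first exact: set_valP.
    by move=> Vz; have : (~` U) z by rewrite -UE.
  case=> Hx nVx; exists (exist _ x (mem_set Hx)) => //.
  apply: contrapT => nU; apply: nVx.
  by have : (~` U) (exist _ x (mem_set Hx)) by []; rewrite -UE.
exact: closedI cH (open_closedC oV).
Qed.

Lemma closed_embedding_homeomorphism_onto (X Y : topologicalType) (f : X -> Y) :
  continuous f -> injective f -> (forall C, closed C -> closed (f @` C)) ->
  homeomorphism_onto f (range f).
Proof.
move=> cf f_inj f_closed.
have f_in x : f x \in range f by apply/mem_set; exists x.
pose h x : set_type (range f) := exist _ (f x) (f_in x).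
pose k (y : set_type (range f)) := let: exist2 x _ _ := cid2 (set_valP y) in x.
have fk y : f (k y) = set_val y by rewrite /k; case: cid2.
have hK : cancel h k by move=> x; apply: f_inj; rewrite fk.
have kK : cancel k h by move=> y; apply: val_inj; rewrite /= fk.
exists h, k; split=> //.
  exact: (@continuous_comp_initial _ _ _ set_val).
apply/continuous_closedP => C cC.
have -> : k @^-1` C = set_val @^-1` (f @` C).
  apply/seteqP; split=> y /=; first by exists (k y).
  by case=> x Cx; rewrite -fk => /f_inj <-.
exact: (continuous_closedP _).1 (@initial_continuous _ _ _) _ (f_closed C cC).
Qed.

Section group.
Context (G : Type) (mul : G -> G -> G) (inv : G -> G) (one : G)
  (hg : is_group mul inv one).

Lemma grp_mulA x y z : mul x (mul y z) = mul (mul x y) z.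
Proof. by case: hg. Qed.
Lemma grp_mul1g x : mul one x = x. Proof. by case: hg. Qed.
Lemma grp_mulg1 x : mul x one = x. Proof. by case: hg. Qed.
Lemma grp_mulVg x : mul (inv x) x = one. Proof. by case: hg. Qed.
Lemma grp_mulgV x : mul x (inv x) = one. Proof. by case: hg. Qed.

Lemma grp_mulKVg x y : mul x (mul (inv x) y) = y.
Proof. by rewrite grp_mulA grp_mulgV grp_mul1g. Qed.

Lemma grp_invMg x y : inv (mul (inv x) y) = mul (inv y) x.
Proof.
have inv_ab : mul (mul (inv x) y) (mul (inv y) x) = one.
  by rewrite -grp_mulA grp_mulKVg grp_mulVg.
by rewrite -[LHS]grp_mulg1 -inv_ab grp_mulA grp_mulVg grp_mul1g.
Qed.

Definition lcoset (K : set G) x := [set z | K (mul (inv x) z)].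

Lemma lcoset_eqP (K : set G) x y : is_subgroup mul inv one K ->
  lcoset K x = lcoset K y <-> K (mul (inv x) y).
Proof.
case=> K1 KM KV; split=> [xKE|Kxy].
  have : lcoset K y y by rewrite /lcoset /= grp_mulVg.
  by rewrite -xKE.
have Kyx : K (mul (inv y) x) by rewrite -grp_invMg; exact: KV.
apply/seteqP; split=> z; rewrite /lcoset /= => Kz.
  by rewrite -(grp_mulKVg x z) grp_mulA; exact: KM.
by rewrite -(grp_mulKVg y z) grp_mulA; exact: KM.
Qed.

End group.

Section subgroup.
Context (G : topologicalType) (mul : G -> G -> G) (inv : G -> G) (one : G)
  (H : set G) (hH : is_subgroup mul inv one H).

Let H1 : H one. Proof. by case: hH. Qed.
Let HM x y : H x -> H y -> H (mul x y). Proof. by case: hH => _ + _; apply. Qed.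
Let HV x : H x -> H (inv x). Proof. by case: hH => _ _; apply. Qed.

Definition subgroup_one : set_type H := exist _ one (mem_set H1).
Definition subgroup_mul (z w : set_type H) : set_type H :=
  exist _ (mul (set_val z) (set_val w))
    (mem_set (HM (set_valP z) (set_valP w))).
Definition subgroup_inv (z : set_type H) : set_type H :=
  exist _ (inv (set_val z)) (mem_set (HV (set_valP z))).

Lemma subgroup_left_topological : left_topological_group mul inv one ->
  left_topological_group subgroup_mul subgroup_inv subgroup_one.
Proof.
case=> -[mulA mul1g mulg1 mulVg mulgV] cL; split.
  by split=> *; apply: val_inj; rewrite /= ?mulA ?mul1g ?mulg1 ?mulVg ?mulgV.
move=> a; apply: (@continuous_comp_initial _ _ _ set_val) => z.
exact: continuous_comp (@initial_continuous _ _ _ _) (cL _ _).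
Qed.

Lemma subgroup_val_image (K : set (set_type H)) :
  is_subgroup subgroup_mul subgroup_inv subgroup_one K ->
  is_subgroup mul inv one (set_val @` K).
Proof.
case=> K1 KM KV; split.
- by exists subgroup_one.
- by move=> _ _ [z Kz <-] [w Kw <-]; exists (subgroup_mul z w); first exact: KM.
- by move=> _ [z Kz <-]; exists (subgroup_inv z); first exact: KV.
Qed.

End subgroup.

Section left_topological_group.
Context (G R : topologicalType) (mul : G -> G -> G) (inv : G -> G) (one : G)
  (hG : left_topological_group mul inv one) (q : G -> R) (hq : T1_reflection q).

Let hg : is_group mul inv one := hG.1.

Lemma T1_kernel_subgroup : is_subgroup mul inv one (q @^-1` [set q one]).
Proof.
split=> [//|x y /= qx qy|x /= qx].
  by rewrite (T1_reflection_compatible hq (hG.2 x) qy) (grp_mulg1 hg).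
have := T1_reflection_compatible hq (hG.2 (inv x)) qx.
by rewrite (grp_mulVg hg) (grp_mulg1 hg) => ->.
Qed.

(* The left cosets of a closed subgroup form a T1 space, since every coset is
   the preimage of K under a left translation. *)
Lemma T1_reflection_lcoset (K : set G) x y :
  closed K -> is_subgroup mul inv one K -> q x = q y -> K (mul (inv x) y).
Proof.
move=> cK hK qxy; apply/(lcoset_eqP hg x y hK).
apply: (T1_reflection_fiber_eq hq _ qxy) => z.
have -> : lcoset mul inv K @^-1` [set lcoset mul inv K z] = mul (inv z) @^-1` K.
  by apply/seteqP; split=> w /=; rewrite -(lcoset_eqP hg z w hK) => ->.
exact: (continuous_closedP _).1 (hG.2 _) _ cK.
Qed.

End left_topological_group.

Section closed_subgroup.
Context (G : topologicalType) (mul : G -> G -> G) (inv : G -> G) (one : G)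
  (hG : left_topological_group mul inv one)
  (H : set G) (hH : is_subgroup mul inv one H) (cH : closed H)
  (RH : topologicalType) (qH : set_type H -> RH) (hqH : T1_reflection qH)
  (RG : topologicalType) (qG : G -> RG) (hqG : T1_reflection qG).

Let hHG := subgroup_left_topological hH hG.

(* The kernel of qH, seen in G, is a closed subgroup of G; hence it contains
   every difference u^-1 x of points identified by qG. *)
Lemma T1_reflection_subgroup_fiber (u : set_type H) x :
  qG x = qG (set_val u) -> exists2 z : set_type H, set_val z = x & qH z = qH u.
Proof.
pose K := set_val @` (qH @^-1` [set qH (subgroup_one hH)]).
have cK : closed K.
  by apply: closed_set_val_image cH _; exact: T1_reflection_fiber_closed.
have hK : is_subgroup mul inv one K.
  exact: subgroup_val_image (T1_kernel_subgroup hHG hqH).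
move=> /esym /(T1_reflection_lcoset hG hqG cK hK) [k qHk kE].
exists (subgroup_mul hH u k); first by rewrite set_valE /= kE (grp_mulKVg hG.1).
rewrite (T1_reflection_compatible hqH (hHG.2 u) qHk).
by congr qH; apply: val_inj; rewrite /= (grp_mulg1 hG.1).
Qed.

Lemma T1_reflection_subgroup_inj (z w : set_type H) :
  qG (set_val z) = qG (set_val w) -> qH z = qH w.
Proof. by move=> /T1_reflection_subgroup_fiber [z' /val_inj <-]. Qed.

Context (i : RH -> RG) (ci : continuous i) (hi : i \o qH = qG \o set_val).

Let iE z : i (qH z) = qG (set_val z).
Proof. by rewrite -[LHS]/((i \o qH) z) hi. Qed.

Lemma T1_reflection_subgroup_closed_image (C : set RH) :
  closed C -> closed (i @` C).
Proof.
case: hqH => _ cqH qH_surj _ cC.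
have -> : i @` C = qG @` (set_val @` (qH @^-1` C)).
  apply/seteqP; split=> _ [c Cc <-].
    have [z zc] := qH_surj c; rewrite -zc iE.
    by exists (set_val z) => //; exists z => //=; rewrite zc.
  by case: Cc => z Cz <-; exists (qH z); rewrite ?iE.
apply: T1_reflection_image_closed => //.
  exact: closed_set_val_image cH ((continuous_closedP _).1 cqH _ cC).
move=> x _ [u Cu <-] /T1_reflection_subgroup_fiber [z zx qHz].
by exists z; rewrite //= qHz.
Qed.

Lemma T1_reflection_subgroup_embedding : homeomorphism_onto i (qG @` H).
Proof.
case: hqH => _ _ qH_surj _.
have -> : qG @` H = range i.
  apply/seteqP; split=> y.
    by case=> x Hx <-; exists (qH (exist _ x (mem_set Hx))); rewrite ?iE.
  case=> r _ <-; have [z <-] := qH_surj r.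
  by rewrite iE; exists (set_val z) => //; exact: set_valP.
apply: closed_embedding_homeomorphism_onto => //.
- move=> r s; have [z <-] := qH_surj r; have [w <-] := qH_surj s.
  by rewrite !iE => /T1_reflection_subgroup_inj.
- exact: T1_reflection_subgroup_closed_image.
Qed.

End closed_subgroup.

Lemma right_topological_group_op (G : topologicalType) (mul : G -> G -> G)
  (inv : G -> G) (one : G) :
  right_topological_group mul inv one ->
  left_topological_group (fun x y => mul y x) inv one.
Proof.
case=> -[mulA mul1g mulg1 mulVg mulgV] cR; split=> //.
by split=> // x y z; rewrite mulA.
Qed.

Lemma is_subgroup_op (G : Type) (mul : G -> G -> G) (inv : G -> G) (one : G)
  (H : set G) :
  is_subgroup mul inv one H -> is_subgroup (fun x y => mul y x) inv one H.
Proof. by case=> H1 HM HV; split=> // x y Hx Hy; exact: HM. Qed.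

Theorem corollary5p11 (G : topologicalType) (mul : G -> G -> G) (inv : G -> G)
  (one : G)
  (hG : left_topological_group mul inv one \/ right_topological_group mul inv one)
  (H : set G) (hH : is_subgroup mul inv one H) (cH : closed H)
  (RH : topologicalType) (qH : set_type H -> RH) (hqH : T1_reflection qH)
  (RG : topologicalType) (qG : G -> RG) (hqG : T1_reflection qG)
  (i : RH -> RG) (ci : continuous i) (hi : i \o qH = qG \o set_val) :
  homeomorphism_onto i (qG @` H).
Proof.
case: hG => [hL|/right_topological_group_op hL].
  exact: (T1_reflection_subgroup_embedding hL hH cH hqH hqG ci hi).
exact: (T1_reflection_subgroup_embedding hL (is_subgroup_op hH) cH
  hqH hqG ci hi).
Qed.
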